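(* Let $i$ be an agent and let $\prec$ be either $\prec_i$ or $\prec_i^{\mathsf{real}}$. Then for all $\varphi,\psi,\varphi_1,\varphi_2,\varphi_3\in\mathcal{L}$: (1) $\models\neg(\varphi\prec\varphi)$; (2) $\models(\psi\prec\varphi)\to\neg(\varphi\prec\psi)$; (3) $\models((\varphi_1\prec\varphi_2)\wedge(\varphi_2\prec\varphi_3))\to(\varphi_1\prec\varphi_3)$. Here $\psi\prec_i\varphi:=(\mathsf{M}_i\varphi\wedge\neg\mathsf{M}_i\psi)\vee(\mathsf{D}_i\psi\wedge\neg\mathsf{D}_i\varphi)$ and $\psi\prec_i^{\mathsf{real}}\varphi:=(\mathsf{M}^{\mathsf{real}}_i\varphi\wedge\neg\mathsf{M}^{\mathsf{real}}_i\psi)\vee(\mathsf{D}^{\mathsf{real}}_i\psi\wedge\neg\mathsf{D}^{\mathsf{real}}_i\varphi)$, with $\mathsf{M}_i\varphi:=\mathcal{A}_i\varphi\wedge\neg\mathcal{R}_i\varphi$, $\mathsf{D}_i\varphi:=\mathcal{R}_i\varphi\wedge\neg\mathcal{A}_i\varphi$, $\mathsf{M}^{\mathsf{real}}_i\varphi:=\mathcal{A}^{\mathsf{real}}_i\varphi\wedge\neg\mathcal{R}^{\mathsf{real}}_i\varphi$, $\mathsf{D}^{\mathsf{real}}_i\varphi:=\mathcal{R}^{\mathsf{real}}_i\varphi\wedge\neg\mathcal{A}^{\mathsf{real}}_i\varphi$.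
   Context: Let $\mathit{Agt}=\{1,\dots,n\}$ and $\mathit{Atm}$ a countably infinite set of atoms containing special atoms $\mathsf{rew}_i,\mathsf{pun}_i$ for each $i$. $\mathcal{L}_0$: $\alpha::=p\mid\neg\alpha\mid\alpha\wedge\alpha\mid\triangle_i\alpha$. A state is $S=((B_i)_i,V)$ with $B_i\subseteq\mathcal{L}_0$, $V\subseteq\mathit{Atm}$; $S\models p$ iff $p\in V$, Boolean as usual, $S\models\triangle_i\alpha$ iff $\alpha\in B_i$. $S\mathcal{E}_iS'$ iff $S'\models\alpha$ for all $\alpha\in B_i$; $S\mathcal{A}_iS'$ iff $S'\models\alpha$ for some $\alpha$ with $(\alpha\to\mathsf{rew}_i)\in B_i$; $S\mathcal{R}_iS'$ iff $S'\models\alpha$ for some $\alpha$ with $(\alpha\to\mathsf{pun}_i)\in B_i$. A model is $(S,U)$ with $S\in U$, $U$ a set of states. $\mathcal{L}$: $\varphi::=\alpha\mid\neg\varphi\mid\varphi\wedge\varphi\mid\Box_i\varphi\mid\mathcal{A}_i\varphi\mid\mathcal{R}_i\varphi\mid\mathcal{A}^{\mathsf{real}}_i\varphi\mid\mathcal{R}^{\mathsf{real}}_i\varphi$. Semantics: $(S,U)\models\alpha$ iff $S\models\alpha$; $(S,U)\models\Box_i\varphi$ iff all $S'\in U$ with $S\mathcal{E}_iS'$ satisfy $\varphi$; $(S,U)\models\mathcal{A}_i\varphi$ (resp. $\mathcal{R}_i\varphi$) iff every $S'\in U$ satisfying $\varphi$ has $S\mathcal{A}_iS'$ (resp. $S\mathcal{R}_iS'$);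 $(S,U)\models\mathcal{A}^{\mathsf{real}}_i\varphi$ (resp. $\mathcal{R}^{\mathsf{real}}_i\varphi$) iff every $S'\in U$ satisfying $\varphi$ with $S\mathcal{E}_iS'$ has $S\mathcal{A}_iS'$ (resp. $S\mathcal{R}_iS'$). $\models\varphi$ means true in all models. *)

From mathcomp Require Import all_boot.
Set Implicit Arguments.
Unset Strict Implicit.
Unset Printing Implicit Defensive.

(* Agents: Agt = {1,...,n}, represented (0-indexed) by the ordinal type 'I_n. *)

Inductive Atm (n : nat) : Type :=
| rew : 'I_n -> Atm n
| pun : 'I_n -> Atm n
| atom : nat -> Atm n.

Inductive L0 (n : nat) : Type :=
| L0_atm : Atm n -> L0 n
| L0_neg : L0 n -> L0 n
| L0_and : L0 n -> L0 n -> L0 n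
| L0_tri : 'I_n -> L0 n -> L0 n.

Definition L0_imp n (a b : L0 n) : L0 n := L0_neg (L0_and a (L0_neg b)).

Record State (n : nat) : Type := mkState {
  B : 'I_n -> L0 n -> Prop;
  V : Atm n -> Prop
}.

Fixpoint sat0 n (S : State n) (a : L0 n) : Prop :=
  match a with
  | L0_atm p => V S p
  | L0_neg b => ~ sat0 S b
  | L0_and b c => sat0 S b /\ sat0 S c
  | L0_tri i b => B S i b
  end.

Definition Erel n (i : 'I_n) (S S' : State n) : Prop :=
  forall a, B S i a -> sat0 S' a.
Definition Arel n (i : 'I_n) (S S' : State n) : Prop :=
  exists a, B S i (L0_imp a (L0_atm (rew i))) /\ sat0 S' a.
Definition Rrel n (i : 'I_n) (S S' : State n) : Prop :=
  exists a, B S i (L0_imp a (L0_atm (pun i))) /\ sat0 S' a.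

Inductive L (n : nat) : Type :=
| L_base : L0 n -> L n
| L_neg : L n -> L n
| L_and : L n -> L n -> L n
| L_box : 'I_n -> L n -> L n
| L_A : 'I_n -> L n -> L n
| L_R : 'I_n -> L n -> L n
| L_Areal : 'I_n -> L n -> L n
| L_Rreal : 'I_n -> L n -> L n.

(* (S,U) |= phi, with U a set of states (S in U required in validity) *)
Fixpoint sat n (U : State n -> Prop) (S : State n) (f : L n) : Prop :=
  match f with
  | L_base a => sat0 S a
  | L_neg g => ~ sat U S g
  | L_and g h => sat U S g /\ sat U S h
  | L_box i g => forall S', U S' -> Erel i S S' -> sat U S' g
  | L_A i g => forall S', U S' -> sat U S' g -> Arel i S S'
  | L_R i g => forall S', U S' -> sat U S' g -> Rrel i S S'
  | L_Areal i g => forall S', U S' -> sat U S' g -> Erel i S S' -> Arel i S S'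
  | L_Rreal i g => forall S', U S' -> sat U S' g -> Erel i S S' -> Rrel i S S'
  end.

Definition valid n (f : L n) : Prop :=
  forall (U : State n -> Prop) (S : State n), U S -> sat U S f.

Definition L_or n (f g : L n) : L n := L_neg (L_and (L_neg f) (L_neg g)).
Definition L_imp n (f g : L n) : L n := L_neg (L_and f (L_neg g)).

Definition M_ag n (i : 'I_n) (f : L n) : L n := L_and (L_A i f) (L_neg (L_R i f)).
Definition D_ag n (i : 'I_n) (f : L n) : L n := L_and (L_R i f) (L_neg (L_A i f)).
Definition M_real n (i : 'I_n) (f : L n) : L n :=
  L_and (L_Areal i f) (L_neg (L_Rreal i f)).
Definition D_real n (i : 'I_n) (f : L n) : L n :=
  L_and (L_Rreal i f) (L_neg (L_Areal i f)).

(* prec i false psi phi  is  psi <_i phi ;  prec i true psi phi  is  psi <_i^real phi *)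
Definition prec n (i : 'I_n) (real : bool) (psi phi : L n) : L n :=
  if real then
    L_or (L_and (M_real i phi) (L_neg (M_real i psi)))
         (L_and (D_real i psi) (L_neg (D_real i phi)))
  else
    L_or (L_and (M_ag i phi) (L_neg (M_ag i psi)))
         (L_and (D_ag i psi) (L_neg (D_ag i phi))).

From mathcomp Require Import all_boot.
From Stdlib Require Import ClassicalEpsilon.

(* Grade a formula 2 if M_i holds of it, 0 if D_i holds, and 1 otherwise; this
   is well defined because M_i and D_i exclude each other.  At every model,
   psi <_i phi holds exactly when the grade of psi is smaller than that of phi,
   so <_i (and likewise <_i^real) is the strict order of nat pulled back along
   the grading, which is irreflexive, asymmetric and transitive. *)

Definition grade (merit demerit : Prop) : nat :=
  if excluded_middle_informative merit then 2
  else if excluded_middle_informative demerit then 0 else 1.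

Lemma grade_ltE (m1 d1 m2 d2 : Prop) : ~ (m1 /\ d1) -> ~ (m2 /\ d2) ->
  ~ (~ (m2 /\ ~ m1) /\ ~ (d1 /\ ~ d2)) <-> grade m1 d1 < grade m2 d2.
Proof.
rewrite /grade => excl1 excl2.
by case: (excluded_middle_informative m1) => ?;
   case: (excluded_middle_informative d1) => ?;
   case: (excluded_middle_informative m2) => ?;
   case: (excluded_middle_informative d2) => ?; split=> //; tauto.
Qed.

Section Grading.

Variables (n : nat) (i : 'I_n) (real : bool).

Definition L_merit (f : L n) : L n := if real then M_real i f else M_ag i f.
Definition L_demerit (f : L n) : L n := if real then D_real i f else D_ag i f.

Lemma precE (psi phi : L n) :
  prec i real psi phi =
  L_or (L_and (L_merit phi) (L_neg (L_merit psi)))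
       (L_and (L_demerit psi) (L_neg (L_demerit phi))).
Proof. by rewrite /L_merit /L_demerit; case: real. Qed.

Variables (U : State n -> Prop) (S : State n).

Lemma sat_merit_demerit (f : L n) :
  ~ (sat U S (L_merit f) /\ sat U S (L_demerit f)).
Proof. by rewrite /L_merit /L_demerit; case: real => /=; tauto. Qed.

Definition rank (f : L n) : nat :=
  grade (sat U S (L_merit f)) (sat U S (L_demerit f)).

Lemma sat_prec (psi phi : L n) :
  sat U S (prec i real psi phi) <-> rank psi < rank phi.
Proof.
rewrite precE; exact: grade_ltE (sat_merit_demerit _) (sat_merit_demerit _).
Qed.

End Grading.

Theorem proposition2 (n : nat) (i : 'I_n) (real : bool)
  (phi psi phi1 phi2 phi3 : L n) :
  valid (L_neg (prec i real phi phi)) /\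
  valid (L_imp (prec i real psi phi) (L_neg (prec i real phi psi))) /\
  valid (L_imp (L_and (prec i real phi1 phi2) (prec i real phi2 phi3))
               (prec i real phi1 phi3)).
Proof.
split; [|split] => U S _; cbn [sat L_imp].
- by move=> /sat_prec; rewrite ltnn.
- move=> [/sat_prec lt_psi_phi]; apply=> /sat_prec lt_phi_psi.
  by move: (ltn_trans lt_psi_phi lt_phi_psi); rewrite ltnn.
- move=> [[/sat_prec lt12 /sat_prec lt23]]; apply; apply/sat_prec.
  exact: ltn_trans lt12 lt23.
Qed.
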